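(* Assume the discrete inf-sup condition: there is $\kappa>0$ such that $$\kappa\|w\|_W\le\sup_{v_\eta\in V_\eta,\ v_\eta\neq0}\frac{\mathcal{A}(w,v_\eta)}{\|v_\eta\|_V}\quad\text{for all } w\in W_\theta\cup S_\theta.$$ Let $(w^n_\theta)\subset W_\theta$ be a minimizing sequence, i.e. $\lim_n\|u-w^n_\theta\|_{op,\eta}=\inf_{w_\theta\in W_\theta}\|u-w_\theta\|_{op,\eta}$. Then $(w^n_\theta)$ has a subsequence converging weakly in $W$ to some $u^*_\theta\in\mathrm{cl}^{seq}_w(W_\theta)$, and every such weak limit satisfies $\|u-u^*_\theta\|_{op,\eta}\le\|u-w_\theta\|_{op,\eta}$ for all $w_\theta\in W_\theta$.
   Context: $W$ and $V$ are reflexive separable real Banach spaces. $\mathcal{A}:W\times V\to\mathbb{R}$ is a bilinear form with $\mathcal{A}(w,v)\le M\|w\|_W\|v\|_V$, $\mathcal{F}:V\to\mathbb{R}$ is bounded linear, and $u\in W$ is the unique solution of $\mathcal{A}(u,v)=\mathcal{F}(v)$ for all $v\in V$. $W_\theta\subseteq W$ and $V_\eta\subseteq V$ are arbitrary subsets, $V_\eta$ containing an element of nonzero norm. For $w\in W$, $\|w\|_{op,\eta}:=\sup_{v_\eta\in V_\eta,\ \|v_\eta\|_V\neq0}\mathcal{A}(w,v_\eta)/\|v_\eta\|_V$. $S_\theta:=\{w_1-w_2:\ w_1,w_2\in W_\theta\}$. $\mathrm{cl}^{seq}_w(W_\theta)$ is the set of all weak limits in $W$ of sequences in $W_\theta$.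 *)

From HB Require Import structures.
From mathcomp Require Import all_boot all_order all_algebra.
From mathcomp Require Import all_classical all_reals all_analysis.
Set Implicit Arguments. Unset Strict Implicit. Unset Printing Implicit Defensive.
Import Order.TTheory GRing.Theory Num.Theory.
Import numFieldNormedType.Exports.
Local Open Scope classical_set_scope.
Local Open Scope ring_scope.

Section Defs.
Variable R : realType.

Definition is_clf (W : normedModType R) (f : W -> R) : Prop :=
  (forall (a : R) (x y : W), f (a *: x + y) = a * f x + f y) /\ continuous f.

Definition weak_cvg (W : normedModType R) (x : nat -> W) (y : W) : Prop :=
  forall f : W -> R, is_clf f -> (fun n => f (x n)) @ \oo --> f y.

Definition separable (W : normedModType R) : Prop :=
  exists D : set W, countable D /\ closure D = setT.

(** reflexive: every bounded linear functional on the dual W' (with the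
    operator norm) is the evaluation at some element of W *)
Definition reflexive_space (W : normedModType R) : Prop :=
  forall Phi : (W -> R) -> R,
    (forall (a : R) (f g : W -> R), is_clf f -> is_clf g ->
        Phi (fun x => a * f x + g x) = a * Phi f + Phi g) ->
    (exists C : R, forall (f : W -> R) (M : R), is_clf f -> 0 <= M ->
        (forall x, `|f x| <= M * `|x|) -> `|Phi f| <= C * M) ->
    exists w : W, forall f, is_clf f -> Phi f = f w.

Definition bilinear_form (W V : normedModType R) (A : W -> V -> R) : Prop :=
  (forall (a : R) (w1 w2 : W) (v : V), A (a *: w1 + w2) v = a * A w1 v + A w2 v) /\
  (forall (a : R) (w : W) (v1 v2 : V), A w (a *: v1 + v2) = a * A w v1 + A w v2).

Definition bounded_linear_functional (V : normedModType R) (F : V -> R) : Prop :=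
  (forall (a : R) (x y : V), F (a *: x + y) = a * F x + F y) /\
  exists C : R, forall v, `|F v| <= C * `|v|.

Definition opnorm (W V : normedModType R) (A : W -> V -> R) (Veta : set V)
  (w : W) : \bar R :=
  ereal_sup [set ((A w v) / `|v|)%:E | v in [set v | Veta v /\ `|v| != 0]].

Definition diffset (W : normedModType R) (Wt : set W) : set W :=
  [set x | exists w1 w2, Wt w1 /\ Wt w2 /\ x = w1 - w2].

Definition wseqcl (W : normedModType R) (Wt : set W) : set W :=
  [set w | exists x : nat -> W, (forall n, Wt (x n)) /\ weak_cvg x w].

End Defs.

From HB Require Import structures.
From mathcomp Require Import all_boot all_order all_algebra.
From mathcomp Require Import all_classical all_reals all_analysis.
From mathcomp Require Import ring lra.
Import Order.TTheory GRing.Theory Num.Theory.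
Import numFieldNormedType.Exports.
Local Open Scope classical_set_scope.
Local Open Scope ring_scope.
Set Implicit Arguments. Unset Strict Implicit. Unset Printing Implicit Defensive.

(* The inf-sup condition on differences bounds the minimizing sequence, since
   [kappa |w_0 - w_n| <= |w_0 - u|_op + |u - w_n|_op].  In a reflexive separable
   space bounded sequences have weakly convergent subsequences: reflexivity
   gives a weak limit point along a free ultrafilter, a diagonal subsequence
   converges against a countable separating family of functionals, and a
   second ultrafilter argument upgrades this to weak convergence.  Finally
   [|.|_op] is a supremum of the continuous functionals [A (.) v / |v|], hence
   weakly sequentially lower semicontinuous, so a weak limit of a minimizing
   sequence is a minimizer. *)

Section LinearFunctionals.
Variables (R : realType) (W : normedModType R).

Definition is_linfun (f : W -> R) : Prop :=
  forall (a : R) (x y : W), f (a *: x + y) = a * f x + f y.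

Definition dual_ball (f : W -> R) : Prop :=
  is_linfun f /\ forall x, `|f x| <= `|x|.

Variable f : W -> R.
Hypothesis f_lin : is_linfun f.

Lemma linfun0 : f 0 = 0.
Proof.
have := f_lin 1 0 0; rewrite scale1r addr0 mul1r => f00.
by apply: (addrI (f 0)); rewrite addr0 -f00.
Qed.

Lemma linfunZ a x : f (a *: x) = a * f x.
Proof. by have := f_lin a x 0; rewrite !addr0 linfun0 addr0. Qed.

Lemma linfunD x y : f (x + y) = f x + f y.
Proof. by have := f_lin 1 x y; rewrite scale1r mul1r. Qed.

Lemma linfunB x y : f (x - y) = f x - f y.
Proof. by have := f_lin (-1) y x; rewrite scaleN1r mulN1r addrC => ->; rewrite addrC. Qed.

Lemma linfunN x : f (- x) = - f x.
Proof. by rewrite -sub0r linfunB linfun0 sub0r. Qed.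

Lemma bounded_linfun_clf (C : R) : (forall x, `|f x| <= C * `|x|) -> is_clf f.
Proof.
move=> fC; split => // x; apply/cvgrPdist_lt => e e0.
have C1 : 0 < `|C| + 1 by rewrite ltr_pwDr // normr_ge0.
apply/nbhs_ballP; exists (e / (`|C| + 1)); first by rewrite /= divr_gt0.
move=> t; rewrite -ball_normE /= -linfunB => xt.
apply: le_lt_trans (fC _) _; apply: le_lt_trans (ler_norm _) _.
rewrite normrM normr_id.
apply: (@le_lt_trans _ _ ((`|C| + 1) * `|x - t|)); first by rewrite ler_wpM2r // lerDl.
by rewrite -ltr_pdivlMl // mulrC.
Qed.

End LinearFunctionals.

Lemma clf_bounded (R : realType) (W : normedModType R) (f : W -> R) :
  is_clf f -> exists C, 0 < C /\ forall x, `|f x| <= C * `|x|.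
Proof.
move=> [f_lin f_cont].
have /cvgrPdist_lt /(_ 1 ltr01) := f_cont 0.
rewrite (linfun0 f_lin) => /nbhs_ballP [d /= d0 fd].
exists (2 / d); split; first by rewrite divr_gt0.
move=> x; have [->|x0] := eqVneq x 0; first by rewrite (linfun0 f_lin) !normr0 mulr0.
have nx0 : 0 < `|x| by rewrite normr_gt0.
have c0 : 0 <= d / 2 / `|x| by rewrite !divr_ge0 // ltW.
(* rescale [x] to norm [d / 2], inside the ball where [|f| < 1] *)
have : ball (0 : W) d ((d / 2 / `|x|) *: x).
  rewrite -ball_normE /= sub0r normrN normrZ ger0_norm // divfK ?gt_eqF //; lra.
move/fd; rewrite /= sub0r normrN (linfunZ f_lin) normrM ger0_norm // => fx_lt.
rewrite -(@ler_pM2l _ (d / 2 / `|x|)); last by rewrite !divr_gt0.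
have -> : d / 2 / `|x| * (2 / d * `|x|) = 1 by field; rewrite !gt_eqF.
exact: ltW.
Qed.

Section UltrafilterLimits.
Variables (R : realType) (T : Type).

Lemma fmap_ultra (U : Type) (G : set_system T) (a : T -> U) :
  UltraFilter G -> UltraFilter (a @ G).
Proof.
move=> UG; split; first exact: fmap_proper_filter.
move=> H PH aG_H; rewrite predeqE => P; split; last exact: aG_H.
move=> HP; have [//|GnP] := in_ultra_setVsetC (a @^-1` P) UG.
have : H (P `&` ~` P) by apply: filterI => //; exact: aG_H.
by rewrite setICr => /filter_ex [].
Qed.

Lemma ultra_bounded_cvg (G : set_system T) (a : T -> R) (B : R) :
  UltraFilter G -> (forall t, `|a t| <= B) -> exists l : R, a @ G --> l.
Proof.
move=> UG aB; have := @segment_compact R (- B) B.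
rewrite compact_ultra => /(_ (a @ G) (fmap_ultra a UG)).
have aG_seg : (a @ G) `[- B, B]%classic.
  by apply: (@filterE _ G) => t /=; rewrite in_itv /= -ler_norml.
by move=> /(_ aG_seg) [l [_ al]]; exists l.
Qed.

Lemma cvg_norm_le (G : set_system T) (a : T -> R) (l B : R) :
  ProperFilter G -> (forall t, `|a t| <= B) -> a @ G --> l -> `|l| <= B.
Proof.
move=> PG aB al; have aB' t : - B <= a t <= B by rewrite -ler_norml.
rewrite ler_norml; apply/andP; split.
- by apply: (cvgr_to_ge al); apply: filterE => t; case/andP: (aB' t).
- by apply: (cvgr_to_le al); apply: filterE => t; case/andP: (aB' t).
Qed.

End UltrafilterLimits.

(* A bounded family has a weak limit along any ultrafilter: the real limits
   [g x_t @ G] define a bounded functional on the dual, which reflexivity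
   represents by a point. *)
Lemma reflexive_ultra_weak_limit (R : realType) (W : normedModType R) (T : Type)
    (G : set_system T) (x : T -> W) (K : R) :
  reflexive_space W -> UltraFilter G -> (forall t, `|x t| <= K) ->
  exists p : W, forall g, is_clf g -> (fun t => g (x t)) @ G --> g p.
Proof.
move=> W_refl UG xK.
have lims g : is_clf g -> exists l : R, (fun t => g (x t)) @ G --> l.
  move=> /clf_bounded [C [C0 gC]]; apply: (@ultra_bounded_cvg _ _ _ _ (C * K)) => // t.
  by apply: le_trans (gC _) _; rewrite ler_wpM2l // ltW.
pose Phi (g : W -> R) := lim ((fun t => g (x t)) @ G).
have PhiE g l : (fun t => g (x t)) @ G --> l -> Phi g = l.
  exact: (cvg_lim (@Rhausdorff R)).
have [p Phi_p] : exists p : W, forall g, is_clf g -> Phi g = g p.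
  apply: W_refl.
    move=> a f g f_clf g_clf; have [lf fl] := lims f f_clf; have [lg gl] := lims g g_clf.
    rewrite (PhiE _ _ fl) (PhiE _ _ gl); apply: PhiE.
    by apply: cvgD => //; apply: cvgMr.
  exists K => f N f_clf N0 fN; have [lf fl] := lims f f_clf; rewrite (PhiE _ _ fl).
  apply: (cvg_norm_le _ _ fl) => t; apply: le_trans (fN _) _.
  by rewrite mulrC ler_wpM2r.
exists p => g g_clf; have [l gl] := lims g g_clf.
by rewrite -Phi_p // (PhiE _ _ gl).
Qed.

Section Separability.
Variables (R : realType) (W : normedModType R).

Definition separating_clfs (f : nat -> W -> R) : Prop :=
  (forall k, is_clf (f k)) /\
  forall d, (forall k, f k d = 0) -> forall g, is_clf g -> g d = 0.

Lemma dual_ballN (f : W -> R) : dual_ball f -> dual_ball (fun x => - f x).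
Proof.
move=> [f_lin f1]; split=> [a x y|x]; last by rewrite normrN.
by rewrite f_lin opprD mulrN.
Qed.

Lemma clf_dual_ball (g : W -> R) : is_clf g -> exists C, 0 < C /\ dual_ball (fun x => g x / C).
Proof.
move=> g_clf; have [C [C0 gC]] := clf_bounded g_clf; have [g_lin _] := g_clf.
exists C; split => //; split=> [a x y|x]; first by rewrite g_lin mulrDl mulrA.
by rewrite normrM normfV (gtr0_norm C0) ler_pdivrMr // mulrC.
Qed.

(* The supremum of [g x] over the dual ball need not be attained, so we only
   ask for half of it. *)
Lemma dual_ball_half_norming (x : W) :
  exists f, dual_ball f /\ forall g, dual_ball g -> g x <= 2 * f x.
Proof.
have ball0 : dual_ball (fun _ : W => 0).
  by split=> [a y z|y]; rewrite ?mulr0 ?addr0 // normr0 normr_ge0.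
pose S := [set f x | f in @dual_ball R W].
have S_sup : has_sup S.
  split; first by exists 0, (fun _ => 0).
  by exists `|x| => _ [f [_ f1] <-]; apply: le_trans (ler_norm _) (f1 _).
have S_ub g : dual_ball g -> g x <= sup S by move=> ?; apply: sup_upper_bound => //; exists g.
have [s0|s0] := leP (sup S) 0.
  by exists (fun _ => 0); split => // g /S_ub; rewrite mulr0 => /le_trans; apply.
have [_ [f f_ball <-] f_near] := sup_adherent (divr_gt0 s0 (ltr0Sn _ 1)) S_sup.
exists f; split => // g /S_ub gS; move: f_near; lra.
Qed.

Lemma separable_separating_clfs : separable W -> exists f, separating_clfs f.
Proof.
move=> [D [D_cnt D_dense]].
have [w w_onto] : exists w : nat -> W, set_surj setT D w by exact/pcard_surjP.
have w_dense d (e : R) : 0 < e -> exists k, `|d - w k| < e.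
  move=> e0; have : closure D d by rewrite D_dense.
  move=> /(_ _ (nbhsx_ballx d e e0)) [y [Dy dy]].
  by have [k _ wk] := w_onto y Dy; exists k; rewrite wk; move: dy; rewrite -ball_normE.
have [f f_norming] := choice (fun k => dual_ball_half_norming (w k)).
exists f; split.
  move=> k; have [[f_lin f1] _] := f_norming k.
  by apply: (bounded_linfun_clf f_lin (C := 1)) => y; rewrite mul1r.
move=> d fd0.
have ball_le0 h : dual_ball h -> h d <= 0.
  move=> [h_lin h1]; apply/ler_addgt0Pr => e e0; rewrite add0r.
  have [k dwk] := w_dense d (e / 3) (divr_gt0 e0 (ltr0Sn _ 2)).
  have [[fk_lin fk1] fk_half] := f_norming k.
  have hd : h d <= h (w k) + e / 3.
    rewrite -[d](subrK (w k)) (linfunD h_lin) addrC lerD2l.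
    exact: le_trans (ler_norm _) (le_trans (h1 _) (ltW dwk)).
  have hwk : h (w k) <= 2 * f k (w k) by apply: fk_half.
  have fkwk : f k (w k) <= e / 3.
    rewrite -[f k (w k)]subr0 -(fd0 k) -(linfunB fk_lin).
    by apply: le_trans (ler_norm _) (le_trans (fk1 _) _); rewrite distrC ltW.
  lra.
move=> g /clf_dual_ball [C [C0 gC]].
have := ball_le0 _ gC; have := ball_le0 _ (dual_ballN gC) => /=.
rewrite oppr_le0 => ge0 le0; have : g d / C = 0 by apply/eqP; rewrite eq_le le0 ge0.
by move/eqP; rewrite mulf_eq0 invr_eq0 (gt_eqF C0) orbF => /eqP.
Qed.

End Separability.

Lemma diagonal_subseq (R : realType) (U : set_system nat) (a : nat -> nat -> R)
    (l : nat -> R) :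
  ProperFilter U -> (forall N, U [set m | (N <= m)%N]) -> (forall k, a k @ U --> l k) ->
  exists phi : nat -> nat, {homo phi : m n / (m < n)%N >-> (m < n)%N} /\
    forall k, (fun n => a k (phi n)) @ \oo --> l k.
Proof.
move=> PU U_free al.
have U_close (e : R) n : 0 < e -> U [set m | forall k, (k <= n)%N -> `|l k - a k m| < e].
  move=> e0; elim: n => [|n IH].
    have /cvgrPdist_lt /(_ e e0) := al 0%N.
    by apply: filterS => m am k; rewrite leqn0 => /eqP ->.
  have /cvgrPdist_lt /(_ e e0) alSn := al n.+1.
  apply: filterS (filterI IH alSn) => m [amn amSn] k.
  by rewrite leq_eqVlt => /orP[/eqP->|]; [exact: amSn|rewrite ltnS; exact: amn].
have pick (nN : nat * nat) : exists m, (nN.2 <= m)%N /\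
    forall k, (k <= nN.1)%N -> `|l k - a k m| < nN.1.+1%:R^-1.
  have e0 : 0 < nN.1.+1%:R^-1 :> R by rewrite invr_gt0 ltr0Sn.
  have [m [Nm am]] := filter_ex (filterI (U_free nN.2) (U_close _ nN.1 e0)).
  by exists m.
have [c c_spec] := choice pick.
pose phi := fix phi n := if n is n'.+1 then c (n, (phi n').+1) else c (0%N, 0%N).
have phi_close n k : (k <= n)%N -> `|l k - a k (phi n)| < n.+1%:R^-1.
  by case: n => [|n]; [have [_] := c_spec (0%N, 0%N)|have [_] := c_spec (n.+1, (phi n).+1)];
    apply.
exists phi; split.
  apply: homo_ltn => [|n]; first exact: ltn_trans.
  by have [] := c_spec (n.+1, (phi n).+1).
move=> k; apply/cvgrPdist_lt => e e0; near=> n.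
apply: lt_trans (phi_close n k _) _; first by near: n; exact: nbhs_infty_ge.
by near: n; exact: (near_infty_natSinv_lt (PosNum e0)).
Unshelve. all: by end_near.
Qed.

Section WeakCompactness.
Variables (R : realType) (W : normedModType R).
Hypothesis W_refl : reflexive_space W.

(* If [g (z n)] stayed [e]-away from [g p] along a subsequence, a weak limit
   point [q] of that subsequence would agree with [p] on the separating family,
   hence on [g]. *)
Lemma separating_weak_cvg (f : nat -> W -> R) (z : nat -> W) (K : R) (p : W) :
  separating_clfs f -> (forall n, `|z n| <= K) ->
  (forall k, (fun n => f k (z n)) @ \oo --> f k p) -> weak_cvg z p.
Proof.
move=> [f_clf f_sep] zK fz_cvg g g_clf; apply: contrapT => g_ncvg.
have : ~ (forall e : R, 0 < e -> \forall n \near \oo, `|g p - g (z n)| < e).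
  by move=> g_cvg; apply/g_ncvg/cvgrPdist_lt.
move=> /existsNP [e] /not_implyP [e0 not_near].
pose S := [set n | e <= `|g p - g (z n)|].
have PF : ProperFilter (within S eventually).
  apply: Build_ProperFilter_ex => // P [N _ NP].
  apply: contrapT => noS; apply: not_near; exists N => // n /= Nn.
  by rewrite ltNge; apply/negP => Sn; apply: noS; exists n; exact: NP.
have [U [UU SU]] := ultraFilterLemma PF.
have [q zq] := reflexive_ultra_weak_limit W_refl UU zK.
have to_U (a : nat -> R) (l : R) : a @ \oo --> l -> a @ U --> l.
  by move=> al P /(cvg_within_filter S al); exact: SU.
have gqp : g q = g p.
  have : g (q - p) = 0.
    apply: (f_sep _ _ g g_clf) => k; have [fk_lin _] := f_clf k.
    apply/eqP; rewrite (linfunB fk_lin) subr_eq0; apply/eqP.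
    exact: (cvg_unique (@Rhausdorff R) (zq _ (f_clf k)) (to_U _ _ (fz_cvg k))).
  by have [g_lin _] := g_clf; rewrite (linfunB g_lin) => /eqP; rewrite subr_eq0 => /eqP.
have gz_cvg : (fun n => `|g p - g (z n)|) @ U --> `|g p - g q|.
  by apply: cvg_norm; apply: cvgB; [exact: cvg_cst|exact: zq].
have : e <= `|g p - g q| by apply: (cvgr_to_ge gz_cvg); apply: SU; exact: nearW.
by rewrite gqp subrr normr0 => /(lt_le_trans e0); rewrite ltxx.
Qed.

Lemma bounded_weak_subseq (z : nat -> W) (K : R) :
  separable W -> (forall n, `|z n| <= K) ->
  exists phi : nat -> nat, {homo phi : m n / (m < n)%N >-> (m < n)%N} /\
    exists p, weak_cvg (z \o phi) p.
Proof.
move=> /separable_separating_clfs [f f_sep] zK.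
have [U [UU oo_U]] := @ultraFilterLemma nat eventually _.
have PU : ProperFilter U by case: UU.
have [p zp] := reflexive_ultra_weak_limit W_refl UU zK.
have [phi [phi_incr fz_cvg]] := @diagonal_subseq R U (fun k n => f k (z n)) (fun k => f k p)
  PU (fun N => oo_U _ (nbhs_infty_ge N)) (fun k => zp _ (f_sep.1 k)).
by exists phi; split => //; exists p; apply: (separating_weak_cvg f_sep) fz_cvg => n; exact: zK.
Qed.

End WeakCompactness.

Lemma weak_cvgBl (R : realType) (W : normedModType R) (x : nat -> W) (y c : W) :
  weak_cvg x y -> weak_cvg (fun n => c - x n) (c - y).
Proof.
move=> xy g g_clf; have [g_lin _] := g_clf; rewrite (linfunB g_lin).
under eq_fun do rewrite (linfunB g_lin).
by apply: cvgB; [exact: cvg_cst|exact: xy].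
Qed.

Lemma cvg_subseq (T : topologicalType) (x : nat -> T) (l : T) (phi : nat -> nat) :
  {homo phi : m n / (m < n)%N >-> (m < n)%N} -> x @ \oo --> l -> (x \o phi) @ \oo --> l.
Proof.
move=> phi_incr xl P /xl [N _ NP]; exists N => // n /= Nn; apply: NP.
have phi_ge k : (k <= phi k)%N by elim: k => // k IH; apply: leq_ltn_trans IH (phi_incr _ _ _).
exact: leq_trans Nn (phi_ge n).
Qed.

Section OperatorSeminorm.
Variables (R : realType) (W V : normedModType R) (A : W -> V -> R) (Veta : set V).

Lemma opnorm_ge w v :
  Veta v -> `|v| != 0 -> ((A w v / `|v|)%:E <= opnorm A Veta w)%E.
Proof. by move=> Vv v0; apply: ereal_sup_ubound; exists v. Qed.

Lemma opnorm_le w (b : \bar R) :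
  (forall v, Veta v -> `|v| != 0 -> ((A w v / `|v|)%:E <= b)%E) -> (opnorm A Veta w <= b)%E.
Proof. by move=> Ab; apply: ub_ereal_sup => _ [v [Vv v0] <-]; exact: Ab. Qed.

Lemma opnormD (w1 w2 : W) : (forall v, is_linfun (A ^~ v)) ->
  (opnorm A Veta (w1 + w2)%R <= opnorm A Veta w1 + opnorm A Veta w2)%E.
Proof.
move=> A_lin; apply: opnorm_le => v Vv v0.
rewrite (linfunD (A_lin v)) mulrDl EFinD.
by apply: leeD; apply: opnorm_ge.
Qed.

Lemma opnorm_le_norm (M : R) w : (forall w v, A w v <= M * `|w| * `|v|) ->
  (opnorm A Veta w <= (M * `|w|)%:E)%E.
Proof.
move=> AM; apply: opnorm_le => v _ v0.
by rewrite lee_fin ler_pdivrMr ?AM // lt0r v0 normr_ge0.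
Qed.

Lemma bounded_form_clf (M : R) v : (forall v, is_linfun (A ^~ v)) ->
  (forall w v, A w v <= M * `|w| * `|v|) -> is_clf (A ^~ v).
Proof.
move=> A_lin AM; apply: (bounded_linfun_clf (A_lin v) (C := M * `|v|)) => w.
rewrite mulrAC ler_norml AM andbT lerNl -(linfunN (A_lin v)).
by have := AM (- w) v; rewrite normrN.
Qed.

Lemma weak_cvg_opnorm_le (x : nat -> W) (y : W) (L : \bar R) :
  (forall v, is_clf (A ^~ v)) -> weak_cvg x y ->
  (fun n => opnorm A Veta (x n)) @ \oo --> L -> (opnorm A Veta y <= L)%E.
Proof.
move=> A_clf xy xL; apply: opnorm_le => v Vv v0.
have Axv : (fun n => (A (x n) v / `|v|)%:E) @ \oo --> (A y v / `|v|)%:E.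
  by apply: cvg_EFin; [exact: nearW|apply: cvgMl; exact: xy _ (A_clf v)].
by apply: (lee_cvg_to Axv xL); apply: nearW => n; exact: opnorm_ge.
Qed.

End OperatorSeminorm.

Section MinimizingSequences.
Variables (R : realType) (W V : normedModType R) (A : W -> V -> R) (Veta : set V) (M : R).
Hypothesis A_lin : forall v, is_linfun (A ^~ v).
Hypothesis AM : forall w v, A w v <= M * `|w| * `|v|.
Variables (u : W) (Wt : set W) (wn : nat -> W).
Hypothesis wn_Wt : forall n, Wt (wn n).
Hypothesis wn_min : (fun n => opnorm A Veta (u - wn n)) @ \oo -->
  ereal_inf [set opnorm A Veta (u - w) | w in Wt].

Lemma minimizing_seq_opnorm_lt :
  exists B : R, \forall n \near \oo, (opnorm A Veta (u - wn n)%R < B%:E)%E.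
Proof.
pose B := M * `|u - wn 0| + 1; exists B.
have inf_lt : nbhs (ereal_inf [set opnorm A Veta (u - w) | w in Wt]) [set y | (y < B%:E)%E].
  apply: open_nbhs_nbhs; split; first exact: open_ereal_lt_ereal.
  apply: le_lt_trans (ereal_inf_lbound _) _; first by exists (wn 0).
  apply: le_lt_trans (opnorm_le_norm Veta _ AM) _; rewrite lte_fin /B; lra.
exact: (wn_min inf_lt).
Qed.

Lemma minimizing_seq_bounded (kappa : R) : 0 < kappa ->
  (forall w, diffset Wt w -> ((kappa * `|w|)%:E <= opnorm A Veta w)%E) ->
  exists N K, forall n, `|wn (n + N)%N| <= K.
Proof.
move=> k0 infsup; have [B [N _ wnB]] := minimizing_seq_opnorm_lt.
exists N, (`|wn 0| + (M * `|wn 0 - u| + B) / kappa) => n.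
set m := (n + N)%N; set w0 := wn 0%N.
have diff : diffset Wt (w0 - wn m) by exists w0, (wn m); do ![split|exact: wn_Wt].
have opn : (opnorm A Veta (w0 - wn m)%R <= (M * `|w0 - u| + B)%:E)%E.
  have -> : w0 - wn m = (w0 - u) + (u - wn m) by rewrite addrA subrK.
  apply: le_trans (opnormD _ _ _ A_lin) _; rewrite EFinD.
  apply: leeD; first exact: opnorm_le_norm.
  by apply/ltW/wnB; rewrite /= leq_addl.
have := le_trans (infsup _ diff) opn; rewrite lee_fin mulrC -ler_pdivlMr // => w0m.
have -> : wn m = w0 - (w0 - wn m) by rewrite opprB addrC subrK.
by apply: le_trans (ler_normB _ _) _; rewrite lerD2l.
Qed.

End MinimizingSequences.

Unset Implicit Arguments.

Theorem mainTheorem4 (R : realType)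
  (W V : completeNormedModType R)
  (hWr : reflexive_space W) (hWs : separable W)
  (hVr : reflexive_space V) (hVs : separable V)
  (A : W -> V -> R) (M : R)
  (hA : bilinear_form A)
  (hAM : forall (w : W) (v : V), A w v <= M * `|w| * `|v|)
  (F : V -> R) (hF : bounded_linear_functional F)
  (u : W) (hu : forall v, A u v = F v)
  (hu_uniq : forall w : W, (forall v, A w v = F v) -> w = u)
  (Wt : set W) (Veta : set V)
  (hVeta : exists v, Veta v /\ `|v| != 0)
  (hinfsup : exists kappa : R, 0 < kappa /\
     forall w : W, Wt w \/ diffset Wt w ->
       ((kappa * `|w|)%:E <= opnorm A Veta w)%E)
  (wn : nat -> W) (hwn : forall n, Wt (wn n))
  (hmin : (fun n => opnorm A Veta (u - wn n)) @ \oo -->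
            ereal_inf [set opnorm A Veta (u - w) | w in Wt]) :
  (exists (phi : nat -> nat) (ustar : W),
      {homo phi : m n / (m < n)%N >-> (m < n)%N} /\
      weak_cvg (wn \o phi) ustar /\ wseqcl Wt ustar) /\
  (forall (phi : nat -> nat) (ustar : W),
      {homo phi : m n / (m < n)%N >-> (m < n)%N} ->
      weak_cvg (wn \o phi) ustar ->
      forall w, Wt w -> (opnorm A Veta (u - ustar)%R <= opnorm A Veta (u - w)%R)%E).
Proof.
have A_lin v : is_linfun (A ^~ v) by move=> a x y; exact: hA.1.
split.
  have [kappa [k0 infsup]] := hinfsup.
  have [N [K wnK]] := minimizing_seq_bounded A_lin hAM hwn hmin k0
    (fun w dw => infsup w (or_intror dw)).
  have [psi [psi_incr [p wp]]] := bounded_weak_subseq hWr hWs wnK.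
  exists (fun n => psi n + N)%N, p; split; first by move=> m n mn; rewrite ltn_add2r psi_incr.
  split; first exact: wp.
  by exists (wn \o (fun n => psi n + N)%N); split => // n; exact: hwn.
move=> phi ustar phi_incr wp w Wt_w.
have A_clf v : is_clf (A ^~ v) by exact: bounded_form_clf.
apply: le_trans (weak_cvg_opnorm_le A_clf (weak_cvgBl (c := u) wp)
  (cvg_subseq phi_incr hmin)) _.
by apply: ereal_inf_lbound; exists w.
Qed.
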